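(* Let $A=kQ/I_S$ be a homotopy path algebra with path category $\mathcal C_A$ and path poset $\operatorname{Path}_A$. Then the functor $\Phi:\operatorname{Path}_A\to\mathcal C_A$, $p\mapsto h(p)$, $(p<q)\mapsto q/p$, is an almost discrete fibration.
   Context: $Q$ is a finite quiver (loops and cycles allowed); paths are concatenated left to right ($pq$ is $p$ followed by $q$), $t(p)$ and $h(p)$ are tail and head. A homotopy path algebra is $A=kQ/I_S$ where $S$ is a set of pairs $(p,q)$ of paths with equal tails and heads, $I_S$ is the ideal generated by the $p-q$, and $I_S$ is left and right cancellative: writing $p\sim q$ iff $p-q\in I_S$, $rp\sim rq$ implies $p\sim q$ and $pr\sim qr$ implies $p\sim q$. The path category $\mathcal C_A$ has objects the vertices of $Q$ and morphisms the $\sim$-classes of paths. $\operatorname{Path}_A$ is the set of all paths (including trivial ones) modulo $\sim$, ordered by $p\le q$ iff $q\sim pr$ for some path $r$, viewed as a category; $q/p$ denotes the (by cancellativity unique) class of $r$ with $q\sim pr$. A factorization $g=g_0\circ\cdots\circ g_{n+1}$ ($n\ge0$) is nontrivial if no $g_i$ is an isomorphism. A functor $F:\mathcal C\to\mathcal D$ is an almost discrete fibration if for every morphism $q$ of $\mathcal D$, every $p$ with $F(p)=q$ and every nontrivial factorization $q=g_0\circ\cdots\circ g_{n+1}$, there is a nontrivial factorization $p=f_0\circ\cdots\circ f_{n+1}$ with $F(f_i)=g_i$, unique up to $(f_i)\sim(f'_i)$ iff there are isomorphisms $h_0,\dots,h_n$ with $f'_0=f_0\circ h_0$, $f'_i=h_{i-1}^{-1}\circ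 f_i\circ h_i$ ($1\le i\le n$), $f'_{n+1}=h_n^{-1}\circ f_{n+1}$. *)

From mathcomp Require Import all_boot all_algebra.
From Stdlib Require Import ClassicalEpsilon.
Set Implicit Arguments. Unset Strict Implicit. Unset Printing Implicit Defensive.
Import GRing.Theory.

(* Generic (small) categories, presented "arrow-only":                 *)
(* a carrier of candidate morphisms, a predicate singling out the      *)
(* actual morphisms, domain/codomain, identities and composition.      *)
(* [comp g f] is  g \circ f  (f first); it is only meaningful when     *)
(* dom g = cod f.                                                      *)
Record cat := Cat {
  ob : Type;
  mor : Type;
  ismor : mor -> Prop;
  dom : mor -> ob;
  cod : mor -> ob;
  idm : ob -> mor;
  comp : mor -> mor -> mor }.

Record functor (C D : cat) := Functor {
  fob : ob C -> ob D;
  fmor : mor C -> mor D }.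

Definition is_functor (C D : cat) (F : functor C D) : Prop :=
  (forall f, ismor f -> ismor (fmor F f)) /\
  (forall f, ismor f -> dom (fmor F f) = fob F (dom f)
                     /\ cod (fmor F f) = fob F (cod f)) /\
  (forall x, fmor F (@idm C x) = @idm D (fob F x)) /\
  (forall f g, ismor f -> ismor g -> dom g = cod f ->
     fmor F (comp g f) = comp (fmor F g) (fmor F f)).

Definition inverse_pair (C : cat) (h k : mor C) : Prop :=
  ismor h /\ ismor k /\ dom k = cod h /\ cod k = dom h /\
  comp k h = @idm C (dom h) /\ comp h k = @idm C (cod h).

Definition iso (C : cat) (f : mor C) : Prop :=
  ismor f /\ exists g, inverse_pair f g.

(* composite  f0 \circ f1 \circ ... \circ fm  of the list [:: f0; ...; fm] *)
Fixpoint compl (C : cat) (f : mor C) (fs : seq (mor C)) : mor C :=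
  if fs is g :: gs then comp f (compl g gs) else f.

(* fl = [:: g_0; ...; g_{n+1}] (n >= 0) is a nontrivial factorization
   g = g_0 \circ ... \circ g_{n+1} *)
Definition nontriv_fact (C : cat) (g : mor C) (fl : seq (mor C)) : Prop :=
  2 <= size fl /\
  (forall i, i < size fl -> ismor (nth g fl i) /\ ~ iso (nth g fl i)) /\
  (forall i, i.+1 < size fl -> dom (nth g fl i) = cod (nth g fl i.+1)) /\
  compl (head g fl) (behead fl) = g.

(* (f_i) ~ (f'_i): isomorphisms h_0..h_n (with inverses k_i = h_i^-1) with
   f'_0 = f_0 h_0, f'_i = h_{i-1}^-1 f_i h_i (1<=i<=n), f'_{n+1} = h_n^-1 f_{n+1} *)
Definition fact_equiv (C : cat) (d : mor C) (fl fl' : seq (mor C)) : Prop :=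
  let n := (size fl).-2 in
  size fl' = size fl /\
  exists hs ks : seq (mor C),
    size hs = n.+1 /\ size ks = n.+1 /\
    (forall i, i <= n -> inverse_pair (nth d hs i) (nth d ks i)
                         /\ cod (nth d hs i) = dom (nth d fl i)) /\
    nth d fl' 0 = comp (nth d fl 0) (nth d hs 0) /\
    (forall i, 1 <= i <= n ->
       nth d fl' i = comp (nth d ks i.-1) (comp (nth d fl i) (nth d hs i))) /\
    nth d fl' n.+1 = comp (nth d ks n) (nth d fl n.+1).

Definition almost_discrete_fibration (C D : cat) (F : functor C D) : Prop :=
  forall (p : mor C) (gl : seq (mor D)),
    ismor p -> nontriv_fact (fmor F p) gl ->
    (exists fl, nontriv_fact p fl /\ map (fmor F) fl = gl) /\
    (forall fl fl', nontriv_fact p fl -> map (fmor F) fl = gl ->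
                    nontriv_fact p fl' -> map (fmor F) fl' = gl ->
                    fact_equiv p fl fl').

Section Quiver.
Variables (V E : finType) (tl hd : E -> V).

(* a raw path: tail vertex and the list of arrows, left to right *)
Definition rpath := (V * seq E)%type.
Definition rvalid (p : rpath) : bool :=
  if p.2 is a :: s then (tl a == p.1) && path (fun a b => hd a == tl b) a s
  else true.

Definition vpath := {p : rpath | rvalid p}.

Definition ptail (p : vpath) : V := (val p).1.
Definition phead (p : vpath) : V := foldl (fun _ a => hd a) (val p).1 (val p).2.

Definition etriv (v : V) : vpath := exist _ (v, [::]) (erefl true).

(* concatenation pq (p followed by q); meaningful when phead p = ptail q *)
Definition vcat (p q : vpath) : vpath :=
  odflt p (insub ((val p).1, (val p).2 ++ (val q).2)).

Section Homotopy.
Variables (k : fieldType) (S : vpath * vpath -> Prop).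
Local Open Scope ring_scope.

(* p ~ q  iff  p - q lies in the two-sided ideal I_S of kQ generated by the
   s1 - s2, (s1,s2) in S, i.e. p - q = sum_i c_i r_i (s1_i - s2_i) t_i
   (equality of coefficients at every path w). *)
Definition sim (p q : vpath) : Prop :=
  exists terms : seq (k * vpath * (vpath * vpath) * vpath),
    (forall x, x \in terms ->
       S x.1.2 /\ phead x.1.1.2 = ptail x.1.2.1 /\ phead x.1.2.1 = ptail x.2
               /\ phead x.1.1.2 = ptail x.1.2.2 /\ phead x.1.2.2 = ptail x.2) /\
    forall w : vpath,
      ((p == w)%:R - (q == w)%:R : k) =
      \sum_(x <- terms)
         x.1.1.1 * ((vcat (vcat x.1.1.2 x.1.2.1) x.2 == w)%:R
                    - (vcat (vcat x.1.1.2 x.1.2.2) x.2 == w)%:R).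

Definition left_cancellative : Prop :=
  forall r p q : vpath, phead r = ptail p -> phead r = ptail q ->
    sim (vcat r p) (vcat r q) -> sim p q.

Definition right_cancellative : Prop :=
  forall r p q : vpath, phead p = ptail r -> phead q = ptail r ->
    sim (vcat p r) (vcat q r) -> sim p q.

Definition pclass := {X : vpath -> Prop | exists p, X = sim p}.
Definition cls (p : vpath) : pclass := exist _ (sim p) (ex_intro _ p erefl).
Definition rep (X : pclass) : vpath :=
  proj1_sig (constructive_indefinite_description _ (proj2_sig X)).

Definition CA : cat :=
  {| ob := V; mor := pclass; ismor := fun _ => True;
     dom := fun f => ptail (rep f); cod := fun f => phead (rep f);
     idm := fun v => cls (etriv v);
     comp := fun g f => cls (vcat (rep f) (rep g)) |}.

Definition ple (X Y : pclass) : Prop :=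
  exists p q r : vpath, X = cls p /\ Y = cls q /\ phead p = ptail r /\
                        sim q (vcat p r).

(* Path_A as a (thin) category: a morphism X -> Y is the pair (X,Y) with X<=Y *)
Definition PathA : cat :=
  {| ob := pclass; mor := (pclass * pclass)%type;
     ismor := fun XY => ple XY.1 XY.2;
     dom := fst; cod := snd;
     idm := fun X => (X, X);
     comp := fun g f => (f.1, g.2) |}.

(* q/p : the (class of the) path r with q ~ p r *)
Definition pquot (X Y : pclass) : vpath :=
  epsilon (inhabits (rep X))
    (fun r => phead (rep X) = ptail r /\ sim (rep Y) (vcat (rep X) r)).

Definition Phi : functor PathA CA :=
  @Functor PathA CA (fun X => phead (rep X))
                    (fun XY => cls (pquot XY.1 XY.2)).

End Homotopy.
End Quiver.

From Pilot Require Import Defs.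
From mathcomp Require Import all_boot all_algebra.
From Stdlib Require Import Classical FunctionalExtensionality PropExtensionality ProofIrrelevance ClassicalEpsilon.
Set Implicit Arguments. Unset Strict Implicit. Unset Printing Implicit Defensive.
Import GRing.Theory.

(* Left cancellation makes the quotient q/p of p <= q in Path_A unique up to homotopy,
   so Phi is well defined and functorial: (r/q)(q/p) = r/p.  A morphism g of C_A out
   of h(p) then has exactly one lift with source p, namely p <= p g, since r/p
   determines r = p (r/p).  Hence a nontrivial factorization g_0 ... g_(n+1) of q/p
   lifts to the chain p <= p g_(n+1) <= p g_(n+1) g_n <= ... <= q and to nothing
   else; the lifted steps are not isomorphisms, because p <= p g <= p forces g to be
   invertible.  As Path_A is thin, uniqueness up to the equivalence of
   factorizations is plain equality. *)

Section Chains.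
Variable C : Defs.cat.

Definition chain_cod (v : ob C) (l : seq (mor C)) : ob C :=
  if l is f :: _ then cod f else v.

Fixpoint chain_from (v : ob C) (l : seq (mor C)) : Prop :=
  if l is f :: l' then dom f = chain_cod v l' /\ chain_from v l' else True.

Lemma chain_fromP (d : mor C) v l : 0 < size l ->
  chain_from v l <->
  (forall i, i.+1 < size l -> dom (nth d l i) = cod (nth d l i.+1)) /\ dom (last d l) = v.
Proof.
case: l => [|f l] // _; elim: l f => [|g l IH] f; first by split=> /= [[-> _]|[_ ->]].
rewrite [chain_from _ _]/= -/(chain_from v (g :: l)) IH.
split=> [[fg [hl hv]]|[hl hv]].
  by split=> // -[|i] //= /hl.
by split; [exact: (hl 0) | split=> // i /(hl i.+1)].
Qed.

Lemma chain_from_drop v l i : chain_from v l -> chain_from v (drop i l).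
Proof. by elim: l i => [|f l IH] [|i] //= [_ /IH]. Qed.

End Chains.

Section Paths.
Variables (V E : finType) (tl hd : E -> V).
Local Notation vp := (vpath tl hd).

Lemma rvalid_cat (x y : vp) : phead x = ptail y ->
  rvalid tl hd ((val x).1, (val x).2 ++ (val y).2).
Proof.
have foldl_hd a s : foldl (fun _ b => hd b) (hd a) s = hd (last a s).
  by elim: s a => [|b s IH] a //=.
case: x => [[x1 [|a s]] /= vx]; case: y => [[y1 t] vy]; rewrite /phead /ptail /=.
  by move=> ->.
case/andP: vx => ta ps; rewrite foldl_hd /rvalid /= ta cat_path ps /=.
by case: t vy => [|b t] //= /andP [/eqP -> ->] ->; rewrite andbT.
Qed.

Lemma vcat_val (x y : vp) : phead x = ptail y ->
  val (vcat x y) = ((val x).1, (val x).2 ++ (val y).2).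
Proof. by move=> xy; rewrite /vcat (insubT _ (rvalid_cat xy)). Qed.

Lemma ptail_vcat (x y : vp) : ptail (vcat x y) = ptail x.
Proof. by rewrite /vcat /ptail; case: insubP => [u _ ->|]. Qed.

Lemma phead_vcat (x y : vp) : phead x = ptail y -> phead (vcat x y) = phead y.
Proof.
by move=> xy; rewrite {1}/phead vcat_val //= foldl_cat; move: xy; rewrite /phead /ptail => ->.
Qed.

Lemma vcatA (x y z : vp) : phead x = ptail y -> phead y = ptail z ->
  vcat (vcat x y) z = vcat x (vcat y z).
Proof.
move=> xy yz; apply: val_inj.
rewrite [LHS]vcat_val ?phead_vcat // [RHS]vcat_val ?ptail_vcat //.
by rewrite !vcat_val //= catA.
Qed.

Lemma vcat_etriv (x : vp) v : vcat x (etriv tl hd v) = x.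
Proof. by case: x => [[a s] vs]; apply: val_inj; rewrite /vcat /= cats0 (insubT _ vs). Qed.

Lemma vcat_injl (r x y : vp) : phead r = ptail x -> phead r = ptail y ->
  vcat r x = vcat r y -> x = y.
Proof.
move=> rx ry /(congr1 val); rewrite !vcat_val // => -[].
move/(congr1 (drop (size (val r).2))); rewrite !drop_size_cat // => exy.
apply: val_inj; move: rx ry exy; rewrite /ptail.
by case: x => [[? ?] ?]; case: y => [[? ?] ?] /= -> <- ->.
Qed.

Lemma vcat_injr (r x y : vp) : phead x = ptail r -> phead y = ptail r ->
  vcat x r = vcat y r -> x = y.
Proof.
move=> xr yr /(congr1 val); rewrite !vcat_val // => -[ex exy].
have sxy : size (val x).2 = size (val y).2.
  by move/(congr1 size): exy; rewrite !size_cat => /addIn.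
move/(congr1 (take (size (val x).2))): exy; rewrite take_size_cat // sxy take_size_cat //.
by move=> {}exy; apply: val_inj; rewrite [val x]surjective_pairing ex exy -surjective_pairing.
Qed.

End Paths.

Section Homotopy.
Variables (k : fieldType) (V E : finType) (tl hd : E -> V).
Variable S : vpath tl hd * vpath tl hd -> Prop.
Local Notation vp := (vpath tl hd).
Local Notation sim := (sim k S).
Local Open Scope ring_scope.

(* A summand c r (s1 - s2) t of an element of I_S is stored as ((c, r), (s1, s2), t). *)
Local Notation term := (k * vp * (vp * vp) * vp)%type.

Definition term_lhs (x : term) : vp := vcat (vcat x.1.1.2 x.1.2.1) x.2.
Definition term_rhs (x : term) : vp := vcat (vcat x.1.1.2 x.1.2.2) x.2.
Definition term_ok (x : term) : Prop :=
  S x.1.2 /\ phead x.1.1.2 = ptail x.1.2.1 /\ phead x.1.2.1 = ptail x.2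
          /\ phead x.1.1.2 = ptail x.1.2.2 /\ phead x.1.2.2 = ptail x.2.

Lemma ptail_term x : ptail (term_lhs x) = ptail (term_rhs x).
Proof. by rewrite /term_lhs /term_rhs !ptail_vcat. Qed.

Lemma phead_term x : term_ok x ->
  phead (term_lhs x) = phead x.2 /\ phead (term_rhs x) = phead x.2.
Proof. by case=> _ [e1 [e2 [e3 e4]]]; rewrite /term_lhs /term_rhs !phead_vcat. Qed.

Lemma sim_refl p : sim p p.
Proof. by exists [::]; split=> // w; rewrite big_nil subrr. Qed.

Lemma sim_sym p q : sim p q -> sim q p.
Proof.
case=> T [HT HE]; exists [seq ((- x.1.1.1, x.1.1.2), x.1.2, x.2) | x <- T]; split.
  by move=> x /mapP [y yT ->]; exact: (HT y yT).
move=> w; rewrite big_map -opprB HE -sumrN; apply: eq_bigr => x _.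
by rewrite /= mulNr.
Qed.

Lemma sim_trans p q r : sim p q -> sim q r -> sim p r.
Proof.
case=> T1 [HT1 HE1] [T2 [HT2 HE2]]; exists (T1 ++ T2); split.
  by move=> x; rewrite mem_cat => /orP [] ?; [apply: HT1 | apply: HT2].
by move=> w; rewrite big_cat /= -HE1 -HE2 addrA subrK.
Qed.

Lemma sum_indicator (W : seq vp) (P : pred vp) a : uniq W -> a \in W ->
  \sum_(w <- W | P w) ((a == w)%:R : k) = (P a)%:R.
Proof.
elim: W => [|b W IH] //= /andP [bW uW]; rewrite inE big_cons => /orP [/eqP ->|aW].
  rewrite eqxx big1_seq ?addr0; first by case: (P b).
  by move=> w /andP [_ wW]; case: eqP => // e; move: bW; rewrite e wW.
rewrite IH //; case: ifP => // _; case: eqP => [e|]; last by rewrite add0r.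
by move: bW; rewrite -e aW.
Qed.

(* Summing the coefficient identity over the paths with the endpoints of p gives
   1 - [q has them] = 0, as every term contributes 0: its two sides share endpoints. *)
Lemma sim_ends p q : sim p q -> ptail p = ptail q /\ phead p = phead q.
Proof.
case=> T [HT HE].
pose P (w : vp) := (ptail w, phead w) == (ptail p, phead p).
pose W := undup (p :: q :: flatten [seq [:: term_lhs x; term_rhs x] | x <- T]).
have uW : uniq W by apply: undup_uniq.
have memW x : x \in T -> (term_lhs x \in W) && (term_rhs x \in W).
  move=> xT; rewrite !mem_undup !inE; apply/andP; split; apply/orP; right; apply/orP;
  right; apply/flatten_mapP; exists x => //; by rewrite !inE eqxx ?orbT.
have := @eq_bigr _ 0 +%R _ W P _ _ (fun w _ => HE w).
rewrite sumrB !sum_indicator // ?mem_undup ?inE ?eqxx ?orbT // exchange_big /=.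
rewrite big1_seq; last first.
  move=> x /andP [_ xT]; rewrite -mulr_sumr sumrB.
  case/andP: (memW x xT) => lW rW; rewrite !sum_indicator //.
  have [hl hr] := phead_term (HT x xT).
  by rewrite /P ptail_term hl hr subrr mulr0.
rewrite /P eqxx; case: eqP => [[-> ->] //|_] /eqP.
by rewrite subr0 oner_eq0.
Qed.

Lemma sim_ptail p q : sim p q -> ptail p = ptail q.
Proof. by case/sim_ends. Qed.

Lemma sim_phead p q : sim p q -> phead p = phead q.
Proof. by case/sim_ends. Qed.

(* Terms whose sides lie in D are mapped by tr; the other terms contribute nothing
   at paths of D and are replaced by zero terms. *)
Lemma sim_transport (f : vp -> vp) (D : pred vp) (tr : term -> term) p q :
  {in D &, injective f} -> D p -> D q ->
  (forall x, term_ok x -> D (term_lhs x) = D (term_rhs x)) ->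
  (forall x, term_ok x -> D (term_lhs x) ->
     [/\ term_ok (tr x), (tr x).1.1.1 = x.1.1.1,
         term_lhs (tr x) = f (term_lhs x) & term_rhs (tr x) = f (term_rhs x)]) ->
  sim p q -> sim (f p) (f q).
Proof.
move=> finj Dp Dq Dlr Htr [T [HT HE]].
exists [seq if D (term_lhs x) then tr x else ((0, x.1.1.2), x.1.2, x.2) | x <- T].
split=> [x' /mapP [x xT ->]|w]; first by case: ifP => Dx; [case: (Htr x (HT x xT) Dx)|exact: (HT x xT)].
rewrite big_map.
have [[w' [Dw' <-]] | nw] := classic (exists w', D w' /\ f w' = w).
  rewrite (inj_in_eq finj) // (inj_in_eq finj) // HE.
  apply: eq_big_seq => x xT; have Dr := Dlr x (HT x xT); case: ifP Dr => Dx Dr.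
    have [_ -> tl_lhs tl_rhs] := Htr x (HT x xT) Dx.
    by rewrite -/(term_lhs (tr x)) -/(term_rhs (tr x)) tl_lhs tl_rhs !(inj_in_eq finj) // -Dr.
  have -> : (term_lhs x == w') = false by apply: contraFF Dx => /eqP ->.
  have -> : (term_rhs x == w') = false by apply: contraFF (esym Dr) => /eqP ->.
  by rewrite /= mul0r subrr mulr0.
have nf z : D z -> (f z == w) = false.
  by move=> Dz; apply/negbTE/eqP => e; apply: nw; exists z.
rewrite !nf // subrr big1_seq // => x /andP [_ xT]; case: ifP => Dx; last by rewrite /= mul0r.
have [_ _ tl_lhs tl_rhs] := Htr x (HT x xT) Dx.
rewrite -/(term_lhs (tr x)) -/(term_rhs (tr x)) tl_lhs tl_rhs !nf ?subrr ?mulr0 //.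
by rewrite -Dlr //; exact: (HT x xT).
Qed.

Lemma sim_vcatl r p q : phead r = ptail p -> sim p q -> sim (vcat r p) (vcat r q).
Proof.
move=> rp pq; have pq_tl := sim_ptail pq.
apply: (@sim_transport (vcat r) (fun z => ptail z == phead r)
          (fun x => ((x.1.1.1, vcat r x.1.1.2), x.1.2, x.2))) => //.
- by move=> z1 z2 /eqP h1 /eqP h2; apply: vcat_injl.
- by rewrite rp.
- by rewrite -pq_tl rp.
- by move=> x _; rewrite ptail_term.
move=> x [Sx [e1 [e2 [e3 e4]]]]; rewrite /term_lhs !ptail_vcat => /eqP/esym rx.
have rx1 : phead r = ptail (vcat x.1.1.2 x.1.2.1) by rewrite ptail_vcat.
have rx2 : phead r = ptail (vcat x.1.1.2 x.1.2.2) by rewrite ptail_vcat.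
split=> //; first by rewrite /term_ok /= phead_vcat.
- by rewrite /term_lhs /= (vcatA rx e1) (vcatA rx1) // phead_vcat.
- by rewrite /term_rhs /= (vcatA rx e3) (vcatA rx2) // phead_vcat.
Qed.

Lemma sim_vcatr r p q : phead p = ptail r -> sim p q -> sim (vcat p r) (vcat q r).
Proof.
move=> pr pq; have pq_hd := sim_phead pq.
apply: (@sim_transport (fun z => vcat z r) (fun z => phead z == ptail r)
          (fun x => ((x.1.1.1, x.1.1.2), x.1.2, vcat x.2 r))) => //.
- by move=> z1 z2 /eqP h1 /eqP h2; apply: vcat_injr.
- by rewrite pr.
- by rewrite -pq_hd pr.
- by move=> x /phead_term [-> ->].
move=> x ok; have [-> _] := phead_term ok; move=> /eqP xr.
case: ok => Sx [e1 [e2 [e3 e4]]].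
have x1 : phead (vcat x.1.1.2 x.1.2.1) = ptail x.2 by rewrite phead_vcat.
have x2 : phead (vcat x.1.1.2 x.1.2.2) = ptail x.2 by rewrite phead_vcat.
split=> //; first by rewrite /term_ok /= !ptail_vcat.
- by rewrite /term_lhs /= (vcatA x1 xr).
- by rewrite /term_rhs /= (vcatA x2 xr).
Qed.

Lemma sim_vcat p p' q q' : phead p = ptail q -> sim p p' -> sim q q' ->
  sim (vcat p q) (vcat p' q').
Proof.
move=> pq pp' qq'; apply: sim_trans (sim_vcatr pq pp') (sim_vcatl _ qq').
by rewrite -(sim_phead pp').
Qed.

End Homotopy.

Section Classes.
Variables (k : fieldType) (V E : finType) (tl hd : E -> V).
Variable S : vpath tl hd * vpath tl hd -> Prop.
Local Notation sim := (sim k S).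
Local Notation cl := (cls k S).
Local Notation pcl := (pclass k S).

Lemma rep_spec (X : pcl) : proj1_sig X = sim (rep X).
Proof. exact: (proj2_sig (constructive_indefinite_description _ (proj2_sig X))). Qed.

Lemma pclass_inj (X Y : pcl) : proj1_sig X = proj1_sig Y -> X = Y.
Proof. by case: X Y => [x hx] [y hy] /= exy; subst y; rewrite (proof_irrelevance _ hx hy). Qed.

Lemma rep_cls p : sim (rep (cl p)) p.
Proof.
have /= e := rep_spec (cl p).
by apply: sim_sym; rewrite e; exact: sim_refl.
Qed.

Lemma ptail_rep_cls p : ptail (rep (cl p)) = ptail p.
Proof. exact: sim_ptail (rep_cls p). Qed.

Lemma phead_rep_cls p : phead (rep (cl p)) = phead p.
Proof. exact: sim_phead (rep_cls p). Qed.

Lemma cls_eq p q : sim p q -> cl p = cl q.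
Proof.
move=> pq; apply: pclass_inj; apply: functional_extensionality => w.
apply: propositional_extensionality.
by split=> [pw|qw]; [exact: sim_trans (sim_sym pq) pw | exact: sim_trans pq qw].
Qed.

Lemma cls_rep (X : pcl) : cl (rep X) = X.
Proof. by apply: pclass_inj; rewrite /= rep_spec. Qed.

Definition clcat (A g : pcl) : pcl := cl (vcat (rep A) (rep g)).

Lemma clcat_cls p r : phead p = ptail r -> clcat (cl p) (cl r) = cl (vcat p r).
Proof.
by move=> pr; apply/cls_eq/sim_vcat; rewrite ?phead_rep_cls ?ptail_rep_cls //; exact: rep_cls.
Qed.

Lemma ptail_rep_clcat A g : ptail (rep (clcat A g)) = ptail (rep A).
Proof. by rewrite ptail_rep_cls ptail_vcat. Qed.

Lemma phead_rep_clcat A g : phead (rep A) = ptail (rep g) -> phead (rep (clcat A g)) = phead (rep g).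
Proof. by move=> Ag; rewrite phead_rep_cls phead_vcat. Qed.

Lemma clcatA A f g : phead (rep A) = ptail (rep f) -> phead (rep f) = ptail (rep g) ->
  clcat (clcat A f) g = clcat A (clcat f g).
Proof.
move=> Af fg; apply: cls_eq; apply: (sim_trans (q := vcat (vcat (rep A) (rep f)) (rep g))).
  by apply: sim_vcatr; [rewrite phead_rep_cls phead_vcat | exact: rep_cls].
rewrite vcatA //; apply: sim_vcatl; first by rewrite ptail_vcat.
exact: sim_sym (rep_cls _).
Qed.

End Classes.

Section PathCategories.
Variables (k : fieldType) (V E : finType) (tl hd : E -> V).
Variable S : vpath tl hd * vpath tl hd -> Prop.
Hypothesis Hlc : left_cancellative k S.
Local Notation vp := (vpath tl hd).
Local Notation sim := (sim k S).
Local Notation cl := (cls k S).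
Local Notation pcl := (pclass k S).
Local Notation et := (etriv tl hd).
Implicit Types (A B C g : pcl) (p q r s : vp).

Lemma quot_spec_of A B r : phead (rep A) = ptail r -> sim (rep B) (vcat (rep A) r) ->
  phead (rep A) = ptail (pquot A B) /\ sim (rep B) (vcat (rep A) (pquot A B)).
Proof.
move=> Ar BAr.
by apply: (epsilon_spec _ (fun r => phead (rep A) = ptail r /\ sim (rep B) (vcat (rep A) r))); exists r.
Qed.

Lemma quot_spec A B : ple A B ->
  phead (rep A) = ptail (pquot A B) /\ sim (rep B) (vcat (rep A) (pquot A B)).
Proof.
case=> p [q [r [-> [-> [pr qpr]]]]]; apply: (quot_spec_of (r := r)); first by rewrite phead_rep_cls.
apply: sim_trans (rep_cls _ _ q) (sim_trans qpr _).
by apply: sim_vcatr => //; exact: sim_sym (rep_cls _ _ _).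
Qed.

Lemma quot_phead A B : ple A B -> phead (pquot A B) = phead (rep B).
Proof. by case/quot_spec=> AB /sim_phead ->; rewrite phead_vcat. Qed.

Lemma ple_clcat A g : phead (rep A) = ptail (rep g) -> ple A (clcat A g).
Proof.
move=> Ag; exists (rep A), (rep (clcat A g)), (rep g).
by rewrite !cls_rep; do !split=> //; exact: rep_cls.
Qed.

Lemma ple_refl A : ple A A.
Proof.
exists (rep A), (rep A), (et (phead (rep A))).
by rewrite cls_rep vcat_etriv; do !split=> //; exact: sim_refl.
Qed.

Lemma clcat_quot A B : ple A B -> clcat A (cl (pquot A B)) = B.
Proof.
case/quot_spec=> Ar BAr; rewrite -[RHS]cls_rep; apply: cls_eq.
apply: sim_trans (sim_vcatl _ (rep_cls _ _ _)) (sim_sym BAr); by rewrite ptail_rep_cls.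
Qed.

Lemma quot_unique A B r : phead (rep A) = ptail r -> sim (rep B) (vcat (rep A) r) ->
  sim (pquot A B) r.
Proof.
move=> Ar BAr; have [Aq BAq] := quot_spec_of Ar BAr.
exact: Hlc Aq Ar (sim_trans (sim_sym BAq) BAr).
Qed.

Lemma quot_clcat A g : phead (rep A) = ptail (rep g) -> cl (pquot A (clcat A g)) = g.
Proof. by move=> Ag; rewrite -[RHS]cls_rep; apply/cls_eq/quot_unique/rep_cls. Qed.

Lemma quot_refl A : sim (pquot A A) (et (phead (rep A))).
Proof. by apply: quot_unique; rewrite ?vcat_etriv //; exact: sim_refl. Qed.

Lemma quot_trans A B C : ple A B -> ple B C ->
  sim (pquot A C) (vcat (pquot A B) (pquot B C)).
Proof.
move=> /quot_spec [Ar BAr] BC; have [Br CBr] := quot_spec BC.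
have rs : phead (pquot A B) = ptail (pquot B C) by rewrite -Br (sim_phead BAr) phead_vcat.
apply: quot_unique; first by rewrite ptail_vcat.
rewrite -vcatA //; apply: sim_trans CBr (sim_vcatr _ BAr); by rewrite Br.
Qed.

Lemma iso_cls r s : phead r = ptail s ->
  sim (vcat r s) (et (ptail r)) -> sim (vcat s r) (et (ptail s)) ->
  iso (C := CA k S) (cl r).
Proof.
move=> rs rs1 sr1; have sr : phead s = ptail r by rewrite -(phead_vcat rs) (sim_phead rs1).
split=> //; exists (cl s); rewrite /inverse_pair /= !ptail_rep_cls !phead_rep_cls.
do !split=> //.
- by rewrite -/(clcat (cl r) (cl s)) clcat_cls //; apply: cls_eq.
- by rewrite -/(clcat (cl s) (cl r)) clcat_cls // rs; apply: cls_eq.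
Qed.

Lemma quot_iso A B : ple A B -> ple B A -> iso (C := CA k S) (cl (pquot A B)).
Proof.
move=> AB BA; have [Ar _] := quot_spec AB; have [Bs _] := quot_spec BA.
apply: (iso_cls (s := pquot B A)); first by rewrite quot_phead.
- by rewrite -Ar; apply: sim_trans (sim_sym (quot_trans AB BA)) (quot_refl A).
- by rewrite -Bs; apply: sim_trans (sim_sym (quot_trans BA AB)) (quot_refl B).
Qed.

Lemma iso_PathA_ple A B : iso (C := PathA k S) (A, B) -> ple B A.
Proof. by case=> _ [[B' A'] [_ [BA' [/= eB [/= eA _]]]]]; rewrite -eB -eA. Qed.

Lemma compl_PathA f fs : compl (C := PathA k S) f fs = ((last f fs).1, f.2).
Proof. by elim: fs f => [|g fs IH] [A B] //=; rewrite IH. Qed.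

Lemma ptail_rep_compl f fs : ptail (rep (compl (C := CA k S) f fs)) = ptail (rep (last f fs)).
Proof. by elim: fs f => [|g fs IH] f //=; rewrite ptail_rep_clcat. Qed.

Lemma phead_rep_compl v f fs : chain_from (C := CA k S) v (f :: fs) ->
  phead (rep (compl (C := CA k S) f fs)) = phead (rep f).
Proof.
elim: fs f => [|g fs IH] f //= [fg gfs].
by rewrite -/(clcat _ _) phead_rep_clcat // (IH g gfs).
Qed.

Lemma Phi_functor : is_functor (Phi k S).
Proof.
split=> //; split; [|split].
- move=> [A B] /= AB; rewrite ptail_rep_cls phead_rep_cls quot_phead //.
  by case: (quot_spec AB).
- by move=> A; apply/cls_eq/quot_refl.
move=> [A B] [B' C] /= AB BC eB; subst B'.
have rs : phead (pquot A B) = ptail (pquot B C) by rewrite quot_phead //; case: (quot_spec BC).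
by rewrite -/(clcat _ _) clcat_cls //; apply/cls_eq/quot_trans.
Qed.

End PathCategories.

Section Lifting.
Variables (k : fieldType) (V E : finType) (tl hd : E -> V).
Variable S : vpath tl hd * vpath tl hd -> Prop.
Hypothesis Hlc : left_cancellative k S.
Local Notation pcl := (pclass k S).
Local Notation lcod := (chain_cod (C := PathA k S)).
Local Notation PhiM := (fmor (Phi k S)).
Implicit Types (X Y g : pcl) (gl : seq pcl) (fl : seq (pcl * pcl)).

(* The lift of [:: g_0; ...; g_m] from X: the chain X <= X g_m <= X g_m g_(m-1) <= ...,
   listed from its top step down. *)
Definition lift X gl : seq (pcl * pcl) :=
  foldr (fun g fl => (lcod X fl, clcat (lcod X fl) g) :: fl) [::] gl.

Lemma size_lift X gl : size (lift X gl) = size gl.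
Proof. by elim: gl => //= g gl ->. Qed.

Lemma drop_lift X gl i : lift X (drop i gl) = drop i (lift X gl).
Proof. by elim: gl i => [|g gl IH] [|i] //=; exact: IH. Qed.

Lemma nth_lift (d : pcl * pcl) (d' : pcl) X gl i : i < size gl ->
  nth d (lift X gl) i =
  (lcod X (lift X (drop i.+1 gl)), clcat (lcod X (lift X (drop i.+1 gl))) (nth d' gl i)).
Proof. by move=> hi; rewrite -[i in LHS]addn0 -nth_drop -drop_lift (drop_nth d' hi). Qed.

Lemma chain_from_lift X gl : chain_from (C := PathA k S) X (lift X gl).
Proof. by elim: gl => //= g gl IH; split. Qed.

Lemma phead_lcod_lift X gl : chain_from (C := CA k S) (phead (rep X)) gl ->
  phead (rep (lcod X (lift X gl))) = chain_cod (C := CA k S) (phead (rep X)) gl.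
Proof. by elim: gl => [|g gs IH] //= [gs_cod /IH gs_lcod]; rewrite phead_rep_clcat // gs_lcod. Qed.

Lemma lift_step (d : pcl) X gl i : chain_from (C := CA k S) (phead (rep X)) gl -> i < size gl ->
  phead (rep (lcod X (lift X (drop i.+1 gl)))) = ptail (rep (nth d gl i)).
Proof.
move=> /(chain_from_drop i) + lt_i; rewrite (drop_nth d lt_i) => -[/= -> /phead_lcod_lift]; exact.
Qed.

Lemma lcod_lift X g gl : chain_from (C := CA k S) (phead (rep X)) (g :: gl) ->
  lcod X (lift X (g :: gl)) = clcat X (compl (C := CA k S) g gl).
Proof.
elim: gl g => [|g' gl IH] g // [gg' hch].
have {}hch : chain_from (C := CA k S) (phead (rep X)) (g' :: gl) := hch.
have /(chain_fromP (C := CA k S) (l := _ :: _) g' _ isT) [_ last_X] := hch.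
have -> : lcod X (lift X [:: g, g' & gl]) = clcat (lcod X (lift X (g' :: gl))) g by [].
rewrite IH // clcatA //; first by rewrite ptail_rep_compl; exact: esym last_X.
by rewrite (phead_rep_compl hch); exact: esym gg'.
Qed.

Lemma lift_map_Phi (d : pcl * pcl) X fl : chain_from (C := PathA k S) X fl ->
  (forall i, i < size fl -> ple (nth d fl i).1 (nth d fl i).2) ->
  lift X (map PhiM fl) = fl.
Proof.
elim: fl => [|[A B] fl IH] // [/= -> fl_chain] fl_ple /=.
rewrite IH // => [|i /(fl_ple i.+1) //].
by rewrite clcat_quot //; exact: (fl_ple 0).
Qed.

Lemma lift_map_Phi_nontriv X Y fl : nontriv_fact (C := PathA k S) (X, Y) fl ->
  lift X (map PhiM fl) = fl.
Proof.
case: fl => [|f fl] [_ [fl_mor [fl_comp fl_compl]]] //.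
have last_X : (last f fl).1 = X by rewrite -[X]/((X, Y).1) -fl_compl compl_PathA.
apply: (lift_map_Phi (d := (X, Y))); last by move=> i /fl_mor [].
exact/(chain_fromP (C := PathA k S) (l := _ :: _) (X, Y) X isT).
Qed.

Lemma nontriv_fact_lift X Y gl : ple X Y -> nontriv_fact (PhiM (X, Y)) gl ->
  nontriv_fact (C := PathA k S) (X, Y) (lift X gl) /\ map PhiM (lift X gl) = gl.
Proof.
move=> XY [gl_size [gl_mor [gl_comp]]].
case: gl gl_size gl_mor gl_comp => [|g gl] // gl_size gl_mor gl_comp gl_compl.
have gl_chain : chain_from (C := CA k S) (phead (rep X)) (g :: gl).
  apply/(chain_fromP (C := CA k S) (l := _ :: _) (PhiM (X, Y)) _ isT); split=> //.
  rewrite /= -ptail_rep_compl gl_compl ptail_rep_cls.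
  by case: (quot_spec XY).
have step := lift_step (PhiM (X, Y)) gl_chain.
have lift_size : 0 < size (lift X (g :: gl)) by rewrite size_lift.
have /(chain_fromP (C := PathA k S) (X, Y) X lift_size) [lift_comp lift_last] := chain_from_lift X (g :: gl).
split.
- split; first by rewrite size_lift.
  split=> [i|]; first rewrite size_lift => lt_i.
    rewrite (nth_lift _ (PhiM (X, Y))) //; split; first exact: ple_clcat (step i lt_i).
    move=> /iso_PathA_ple back; apply: (proj2 (gl_mor i lt_i)).
    rewrite -(quot_clcat Hlc (step i lt_i)).
    exact: (quot_iso Hlc (ple_clcat (step i lt_i)) back).
  split=> //; rewrite compl_PathA; congr pair; first exact: lift_last.
  by rewrite [_.2](lcod_lift gl_chain) gl_compl clcat_quot.
apply: (@eq_from_nth _ (PhiM (X, Y))); rewrite size_map size_lift // => i lt_i.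
rewrite (nth_map (X, Y)) ?size_lift // (nth_lift _ (PhiM (X, Y))) //=.
exact: quot_clcat (step i lt_i).
Qed.

Lemma fact_equiv_PathA_refl (p : pcl * pcl) fl : nontriv_fact (C := PathA k S) p fl ->
  fact_equiv (C := PathA k S) p fl fl.
Proof.
move=> [fl_size [_ [fl_comp _]]]; split=> //.
set n := (size fl).-2.
have lt_n : n.+1 < size fl by rewrite /n; case: (size fl) fl_size => [|[|m]].
pose hs := mkseq (fun i => @idm (PathA k S) (nth p fl i).1) n.+1.
exists hs, hs; rewrite size_mkseq; do 2!split=> //.
split=> [i le_i|]; first by rewrite (nth_mkseq p) //; do !split=> //; exact: ple_refl.
split; first by rewrite (nth_mkseq p) //=; case: (nth p fl 0).
split=> [[|i] // /andP [_ le_i]|].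
  rewrite !(nth_mkseq p) /= ?ltnS ?(ltnW le_i) //.
  by move: (fl_comp i (leq_ltn_trans le_i (ltnW lt_n))) => /= ->; case: (nth p fl i.+1).
by rewrite (nth_mkseq p) //; move: (fl_comp n lt_n) => /= ->; case: (nth p fl n.+1).
Qed.

Lemma Phi_almost_discrete_fibration : almost_discrete_fibration (Phi k S).
Proof.
move=> [X Y] gl /= XY gl_fact; have [lift_fact lift_map] := nontriv_fact_lift XY gl_fact.
split=> [|fl fl' fl_fact fl_map fl'_fact fl'_map]; first by exists (lift X gl).
rewrite -(lift_map_Phi_nontriv fl'_fact) fl'_map -fl_map (lift_map_Phi_nontriv fl_fact).
exact: fact_equiv_PathA_refl.
Qed.

End Lifting.

Theorem proposition4p1 (k : fieldType) (V E : finType) (tl hd : E -> V)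
  (S : vpath tl hd * vpath tl hd -> Prop)
  (HS : forall st, S st ->
          ptail st.1 = ptail st.2 /\ phead st.1 = phead st.2)
  (Hlc : left_cancellative k S) (Hrc : right_cancellative k S) :
  is_functor (Phi k S) /\ almost_discrete_fibration (Phi k S).
Proof.
by split; [exact: Phi_functor | exact: Phi_almost_discrete_fibration].
Qed.
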